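(* Let $d>k\ge 0$ be integers with $d$ even and $k$ odd. Then $f(k,d)\le \frac{k+1}{d+2}$.
   Context: For a graph $G=(V,E)$ and an integer $k\ge 0$, a $k$-independent set is a set $S\subseteq V$ such that the induced subgraph $G[S]$ has maximum degree at most $k$; $\alpha_k(G)$ denotes the maximum cardinality of a $k$-independent set of $G$. $n(G)$ is the number of vertices and $d(G)=2|E(G)|/n(G)$ the average degree. For integers $d,k\ge 0$, $f(k,d)=\inf\left\{\frac{\alpha_k(G)}{n(G)} : G \text{ a finite simple graph with at least one vertex and } d(G)\le d\right\}$. *)

From HB Require Import structures.
From mathcomp Require Import all_boot all_order all_algebra.
Set Implicit Arguments. Unset Strict Implicit. Unset Printing Implicit Defensive.
Import Order.TTheory GRing.Theory Num.Theory.

Definition simple_graph (T : finType) (e : rel T) : Prop :=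
  symmetric e /\ irreflexive e.

Definition n_edges (T : finType) (e : rel T) : nat :=
  #|[set p : T * T | e p.1 p.2]| %/ 2.

Definition avg_degree (T : finType) (e : rel T) : rat :=
  ((2 * n_edges e)%:R / #|T|%:R)%R.

Definition k_independent (T : finType) (e : rel T) (k : nat) (S : {set T}) : bool :=
  [forall x in S, #|[set y in S | e x y]| <= k].

Definition alpha_k (T : finType) (e : rel T) (k : nat) : nat :=
  \max_(S : {set T} | k_independent e k S) #|S|.

From HB Require Import structures.
From mathcomp Require Import all_boot all_order all_algebra.
Import Order.TTheory GRing.Theory Num.Theory.

(* The upper bound f(k,d) <= (k+1)/(d+2) is witnessed by a single graph: the
   cocktail-party graph on d+2 = 2m vertices (m = d/2 + 1), i.e. the complete
   graph K_{2m} minus a perfect matching.  Vertices are pairs (i, b) with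
   i : 'I_m, b : bool; two vertices are adjacent iff their first coordinates
   differ, so every vertex has degree d and d(G) = d.
   Let S be a k-independent set.  If some x in S has its partner outside S,
   then S minus x lies in the neighbourhood of x inside S, so |S| <= k + 1.
   Otherwise S is a union of partner pairs, hence |S| is even; and counting
   from any x in S gives |S| <= k + 2, which is odd, so again |S| <= k + 1.
   Hence alpha_k(G)/n(G) <= (k+1)/(d+2), which is even stronger than the
   eps-form of the statement. *)

Lemma avg_degree_le (T : finType) (e : rel T) (D : nat) :
  (0 < #|T|)%N -> #|[set p : T * T | e p.1 p.2]| <= D * #|T| ->
  (avg_degree e <= D%:R)%R.
Proof.
move=> nT hpairs; rewrite /avg_degree /n_edges ler_pdivrMr ?ltr0n //.
by rewrite -natrM ler_nat mulnC; apply: leq_trans (leq_divM _ _) hpairs.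
Qed.

Lemma alpha_k_le (T : finType) (e : rel T) (k B : nat) :
  (forall S : {set T}, k_independent e k S -> #|S| <= B) -> alpha_k e k <= B.
Proof. by move=> hB; apply/bigmax_leqP. Qed.

Section CocktailParty.

Variable m : nat.

Local Notation vertex := ('I_m * bool)%type.

Definition cp_adj : rel vertex := [rel x y | x.1 != y.1].

Definition partner (x : vertex) : vertex := (x.1, ~~ x.2).

Definition twins (x : vertex) : {set vertex} := [set y | x.1 == y.1].

Lemma cp_simple : simple_graph cp_adj.
Proof. by split=> [x y | x]; rewrite /cp_adj /= ?eqxx // eq_sym. Qed.

Lemma card_vertex : #|{: vertex}| = m.*2.
Proof. by rewrite card_prod card_ord card_bool muln2. Qed.

Lemma card_nbhd_twins (S : {set vertex}) (x : vertex) :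
  #|[set y in S | cp_adj x y]| + #|S :&: twins x| = #|S|.
Proof.
rewrite -(cardsID (twins x) S) addnC; congr (_ + _).
by apply: eq_card => y; rewrite !inE andbC.
Qed.

Lemma card_twins_le2 (S : {set vertex}) (x : vertex) : #|S :&: twins x| <= 2.
Proof.
apply: (@leq_trans #|[set (x.1, true); (x.1, false)]|); last first.
  by rewrite cards2; case: (_ != _).
apply/subset_leq_card/subsetP => -[i b]; rewrite !inE /= => /andP[_ /eqP <-].
by case: b; rewrite eqxx ?orbT.
Qed.

Lemma card_twins_le1 (S : {set vertex}) (x : vertex) :
  partner x \notin S -> #|S :&: twins x| <= 1.
Proof.
case: x => i c hp; rewrite -(cards1 (i, c)).
apply/subset_leq_card/subsetP => -[j b]; rewrite !inE /= => /andP[hS /eqP ij].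
subst j; apply/eqP; congr pair; move: hp; rewrite /partner /=.
by case: b c hS => [] [] // ->.
Qed.

(* A set closed under partner is a union of twin pairs, so it has even size. *)
Lemma partner_closed_even (S : {set vertex}) :
  (forall x, x \in S -> partner x \in S) -> ~~ odd #|S|.
Proof.
move=> hcl; have -> : S = setX [set i | (i, true) \in S] [set: bool].
  apply/setP => -[i b]; rewrite !inE andbT.
  by case: b => //; apply/idP/idP => /(hcl (_, _)).
by rewrite cardsX cardsT card_bool oddM andbF.
Qed.

Lemma cp_k_independent_le (k : nat) (S : {set vertex}) :
  odd k -> k_independent cp_adj k S -> #|S| <= k.+1.
Proof.
move=> ok /forall_inP hdeg.
case: (boolP [exists x in S, partner x \notin S]) => [/exists_inP[x xS px] | ].
  rewrite -(card_nbhd_twins S x) -addn1.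
  exact: leq_add (hdeg x xS) (card_twins_le1 S x px).
rewrite negb_exists_in => /forall_inP hcl.
have [-> | [x xS]] := set_0Vmem S; first by rewrite cards0.
have even_S : ~~ odd #|S|.
  by apply: partner_closed_even => y /hcl; rewrite negbK.
have le_k2 : #|S| <= k.+2.
  rewrite -(card_nbhd_twins S x) -addn2.
  exact: leq_add (hdeg x xS) (card_twins_le2 S x).
have ne_k2 : #|S| != k.+2 by apply: contraNneq even_S => ->; rewrite /= ok.
by move: le_k2; rewrite leq_eqVlt (negbTE ne_k2).
Qed.

(* Every vertex has 2m - 2 neighbours, so the ordered adjacent pairs number
   at most (2m - 2) * 2m: the 2 * 2m pairs of twins are all non-adjacent. *)
Lemma cp_adjacent_pairs :
  #|[set p : vertex * vertex | cp_adj p.1 p.2]| + 2 * #|{: vertex}|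
    <= #|{: vertex}| * #|{: vertex}|.
Proof.
rewrite -card_prod -(cardsC [set p : vertex * vertex | cp_adj p.1 p.2]).
rewrite leq_add2l mulnC -card_bool -card_prod -cardsT.
pose twin_pair (q : vertex * bool) : vertex * vertex := (q.1, (q.1.1, q.2)).
have inj_twin_pair : injective twin_pair by move=> [a b] [c e] [-> _ ->].
rewrite -(card_imset [set: vertex * bool] inj_twin_pair).
apply/subset_leq_card/subsetP => p /imsetP[[a b] _ ->].
by rewrite !inE /cp_adj /= eqxx.
Qed.

End CocktailParty.

Theorem mainTheorem9 (k d : nat) :
  (k < d)%N -> ~~ odd d -> odd k ->
  forall eps : rat, (0 < eps)%R ->
  exists (T : finType) (e : rel T),
    [/\ simple_graph e, (0 < #|T|)%N, (avg_degree e <= d%:R)%R &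
        ((alpha_k e k)%:R / #|T|%:R < (k.+1)%:R / (d.+2)%:R + eps)%R].
Proof.
move=> _ even_d odd_k eps eps_gt0.
pose m := (d./2).+1.
have card_m : #|{: 'I_m * bool}| = d.+2.
  by rewrite card_vertex doubleS even_halfK.
exists ('I_m * bool)%type, (@cp_adj m); split.
- exact: cp_simple.
- by rewrite card_m.
- apply: avg_degree_le; first by rewrite card_m.
  rewrite card_m -(leq_add2r (2 * d.+2)) -mulnDl addn2 -card_m.
  exact: cp_adjacent_pairs.
- rewrite card_m; apply: (@le_lt_trans _ _ ((k.+1)%:R / (d.+2)%:R)%R).
    rewrite ler_pM2r ?invr_gt0 ?ltr0n // ler_nat.
    by apply: alpha_k_le => S; apply: cp_k_independent_le.
  by rewrite ltrDl.
Qed.
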